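(* Let $\mathcal{D}=\mathcal{P}_{\mathcal{D}}\cup\mathcal{L}_{\mathcal{D}}$ be a stable dominating set of the incidence graph of an arbitrary projective plane $\Pi_q$ of order $q$ with $|\mathcal{D}|<3q-1$. Suppose there is a point $P$ with $|[P]\cap\mathcal{L}_{\mathcal{D}}|=q+1$. Then one of the following holds: (1) $\mathcal{L}_{\mathcal{D}}=[P]$, $P\notin\mathcal{P}_{\mathcal{D}}$, and $\mathcal{P}_{\mathcal{D}}\cup\{P\}$ is a blocking set of $\Pi_q$ in which every point other than possibly $P$ is essential; (2) there is a unique line $\ell$ not through $P$ such that $\mathcal{L}_{\mathcal{D}}=[P]\cup\{\ell\}$, $P\notin\mathcal{P}_{\mathcal{D}}$, and $\mathcal{P}_{\mathcal{D}}\cup\{P\}$ is a blocking set of the affine plane $\Pi_q\setminus\ell$ in which every point other than possibly $P$ is essential.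
   Context: A dominating set $\mathcal{D}=\mathcal{P}_{\mathcal{D}}\cup\mathcal{L}_{\mathcal{D}}$ of the incidence graph of $\Pi_q$ is a set of points and lines such that every point not in $\mathcal{P}_{\mathcal{D}}$ lies on a line of $\mathcal{L}_{\mathcal{D}}$ and every line not in $\mathcal{L}_{\mathcal{D}}$ contains a point of $\mathcal{P}_{\mathcal{D}}$. $\mathcal{D}$ is stable if it is minimal (no proper subset dominating) and there is no dominating set $\mathcal{D}'\supset\mathcal{D}$ with $|\mathcal{D}'|=|\mathcal{D}|+1$ that contains a dominating set of size less than $|\mathcal{D}|$. $[P]$ is the set of lines through $P$. A blocking set (of a projective or affine plane) is a point set meeting every line of that plane; a point $Q$ of a blocking set $\mathcal{B}$ is essential if $\mathcal{B}\setminus\{Q\}$ is not a blocking set. $\Pi_q\setminus\ell$ denotes the affine plane obtained by deleting the line $\ell$ and its points. *)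

From mathcomp Require Import all_boot.
Set Implicit Arguments. Unset Strict Implicit. Unset Printing Implicit Defensive.

Section ProjPlane.
Variables (Pt Ln : finType) (inc : Pt -> Ln -> bool).

Definition is_proj_plane (q : nat) : Prop :=
  [/\ (forall x y : Pt, x != y ->
         exists l, [/\ inc x l, inc y l &
                   forall l', inc x l' -> inc y l' -> l' = l]),
      (forall l m : Ln, l != m ->
         exists x, [/\ inc x l, inc x m &
                   forall x', inc x' l -> inc x' m -> x' = x]),
      (exists s : seq Pt, size s = 4 /\ uniq s /\
         forall l, #|[set x in s | inc x l]| <= 2) &
      (forall l, #|[set x | inc x l]| = q.+1)].

Definition pencil (P : Pt) : {set Ln} := [set l | inc P l].

Definition dominating (PD : {set Pt}) (LD : {set Ln}) : Prop :=
  (forall x, x \notin PD -> exists2 l, l \in LD & inc x l) /\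
  (forall l, l \notin LD -> exists2 x, x \in PD & inc x l).

Definition dsize (PD : {set Pt}) (LD : {set Ln}) : nat := #|PD| + #|LD|.

Definition minimal_dom (PD : {set Pt}) (LD : {set Ln}) : Prop :=
  dominating PD LD /\
  forall (PD' : {set Pt}) (LD' : {set Ln}), PD' \subset PD -> LD' \subset LD ->
    (PD' != PD) || (LD' != LD) -> ~ dominating PD' LD'.

Definition stable_dom (PD : {set Pt}) (LD : {set Ln}) : Prop :=
  minimal_dom PD LD /\
  forall (PD' : {set Pt}) (LD' : {set Ln}), PD \subset PD' -> LD \subset LD' ->
    dominating PD' LD' -> dsize PD' LD' = (dsize PD LD).+1 ->
    ~ (exists (PD'' : {set Pt}) (LD'' : {set Ln}), [/\ PD'' \subset PD', LD'' \subset LD',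
          dominating PD'' LD'' & dsize PD'' LD'' < dsize PD LD]).

Definition blocking (B : {set Pt}) : Prop :=
  forall l, exists2 x, x \in B & inc x l.

Definition essential_except (blk : {set Pt} -> Prop) (B : {set Pt}) (P : Pt)
  : Prop :=
  forall Q, Q \in B -> Q != P -> ~ blk (B :\ Q).

Definition aff_blocking (ell : Ln) (B : {set Pt}) : Prop :=
  (forall x, x \in B -> ~~ inc x ell) /\
  forall l, l != ell -> exists2 x, x \in B & inc x l.

End ProjPlane.

(* The pencil [P] already dominates every point, so the points of D are only
   needed to dominate the lines of the plane outside L_D.  Minimality then
   forces P out of P_D and forbids points of P_D on the lines of L_D not
   through P; if there were two such lines m1, m2, adding their common point
   R to D and removing m1, m2 would contradict stability.  Hence L_D is [P]
   plus at most one line ell, and the lines outside L_D are exactly the lines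
   not through P (other than ell), which P_D must block, each of its points
   being needed by minimality. *)
From mathcomp Require Import all_boot.
From mathcomp Require Import zify.
Set Implicit Arguments. Unset Strict Implicit. Unset Printing Implicit Defensive.

Section ProjectivePlane.
Variables (Pt Ln : finType) (inc : Pt -> Ln -> bool) (q : nat).
Hypothesis plane : is_proj_plane inc q.

Lemma in_pencil (P : Pt) l : (l \in pencil inc P) = inc P l.
Proof. by rewrite /pencil inE. Qed.

Lemma exists_line_avoiding (P : Pt) : exists l, ~~ inc P l.
Proof.
case: plane => join _ [s [size_s [uniq_s two_on_line]]] _.
case: (pickP (fun l => ~~ inc P l)) => [l Pl | all_through]; first by exists l.
have onP l : inc P l by apply/negbFE/all_through.
have not_three a b c : a \in s -> b \in s -> c \in s ->
    a != b -> a != c -> b != c -> a != P -> False.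
  move=> aS bS cS ab ac bc aP.
  have [lab [al bl _]] := join a b ab.
  have [lac [al' cl _]] := join a c ac.
  have [laP [al'' _ uniq_aP]] := join a P aP.
  have eab : lab = laP := uniq_aP _ al (onP _).
  have eac : lac = laP := uniq_aP _ al' (onP _).
  subst lab lac.
  have abc_on : a |: [set b; c] \subset [set x in s | inc x laP].
    by apply/subsetP => x; rewrite !inE => /orP [|/orP []] /eqP ->; rewrite ?aS ?bS ?cS.
  have := subset_leq_card abc_on; have := two_on_line laP.
  by rewrite cardsU1 cards2 !inE negb_or ab ac bc /=; lia.
clear two_on_line; move: size_s uniq_s not_three; case: s => [|a [|b [|c [|d []]]]] //= _.
rewrite !inE !negb_or => /and4P [/and3P [ab ac ad] /andP [bc bd] cd _] not_three; exfalso.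
have [aP|aP] := eqVneq a P.
  by apply: (not_three b c d); rewrite ?inE ?eqxx ?orbT // -aP eq_sym.
by apply: (not_three a b c); rewrite ?inE ?eqxx ?orbT.
Qed.

(* The lines through P are mapped injectively to their meeting points with a
   line avoiding P. *)
Lemma card_pencil_le (P : Pt) : #|pencil inc P| <= q.+1.
Proof.
have [l Pl] := exists_line_avoiding P; case: plane => join meet _ line_card.
pose f m := if [pick x | inc x m && inc x l] is Some x then x else P.
have fP m : inc P m -> inc (f m) m && inc (f m) l.
  move=> Pm; rewrite /f; case: pickP => [x //|none].
  have ml : m != l by apply: contraNneq Pl => <-.
  by have [x [xm xl _]] := meet _ _ ml; have := none x; rewrite xm xl.
have f_inj : {in pencil inc P &, injective f}.
  move=> m1 m2; rewrite !in_pencil => P1 P2 f12.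
  case/andP: (fP _ P1) => m1f _; case/andP: (fP _ P2) => m2f _.
  have fP1 : f m1 != P by apply: contraNneq Pl => <-; case/andP: (fP _ P1).
  by have [n [_ _ uniq_n]] := join _ _ fP1; rewrite (uniq_n m1) // (uniq_n m2) // f12.
rewrite -(line_card l) -(card_in_imset f_inj); apply/subset_leq_card/subsetP.
by move=> y /imsetP [m]; rewrite in_pencil => Pm ->; rewrite inE; case/andP: (fP m Pm).
Qed.

Lemma exists_line_through2 (P x : Pt) : exists l, inc P l && inc x l.
Proof.
have [join _ _ line_card] := plane.
have joinP y : y != P -> exists l, inc P l && inc y l.
  by move=> yP; have [l [yl Pl _]] := join _ _ yP; exists l; rewrite yl Pl.
have [->|] := eqVneq x P; last exact: joinP.
have [l Pl] := exists_line_avoiding P.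
have : 0 < #|[set y | inc y l]| by rewrite line_card.
case/card_gt0P => y; rewrite inE => yl.
have yP : y != P by apply: contraNneq Pl => <-.
have [m /andP [Pm _]] := joinP y yP.
by exists m; rewrite Pm.
Qed.

Lemma pencil_subset_of_card (P : Pt) (LD : {set Ln}) :
  #|pencil inc P :&: LD| = q.+1 -> pencil inc P \subset LD.
Proof.
move=> card_PLD; apply/setIidPl/eqP.
by rewrite eqEcard subsetIl card_PLD card_pencil_le.
Qed.

Lemma dominating_pencil (P : Pt) (PD' : {set Pt}) (LD' : {set Ln}) :
  pencil inc P \subset LD' ->
  (forall l, l \notin LD' -> exists2 x, x \in PD' & inc x l) ->
  dominating inc PD' LD'.
Proof.
move=> penLD' lines; split=> // x _.
have [l /andP [Pl xl]] := exists_line_through2 P x.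
by exists l => //; apply: (subsetP penLD'); rewrite in_pencil.
Qed.

Section MinimalWithPencil.
Variables (PD : {set Pt}) (LD : {set Ln}) (P : Pt).
Hypothesis minD : minimal_dom inc PD LD.
Hypothesis penLD : pencil inc P \subset LD.

Let outside_avoids l : l \notin LD -> ~~ inc P l.
Proof. by apply: contra => Pl; apply: (subsetP penLD); rewrite in_pencil. Qed.

Lemma minimal_point_needed Q : Q \in PD ->
  ~ (forall l, l \notin LD -> exists2 x, x \in PD :\ Q & inc x l).
Proof.
move=> QPD lines; apply: (minD.2 (PD :\ Q) LD (subsetDl _ _) (subxx _)).
  by rewrite proper_neq ?properD1.
exact: dominating_pencil penLD lines.
Qed.

Lemma minimal_pencil_center_notin : P \notin PD.
Proof.
apply/negP => PPD; apply: (minimal_point_needed PPD) => l lLD.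
have [x xPD xl] := minD.1.2 l lLD.
have xP : x != P by apply: contraNneq (outside_avoids lLD) => <-.
by exists x; rewrite // !inE xP.
Qed.

Lemma minimal_point_needed_setU1 Q : Q \in P |: PD -> Q != P ->
  ~ (forall l, l \notin LD -> exists2 x, x \in (P |: PD) :\ Q & inc x l).
Proof.
rewrite !inE => /orP [/eqP ->|QPD]; first by rewrite eqxx.
move=> _ lines; apply: (minimal_point_needed QPD) => l lLD.
have [x] := lines l lLD; rewrite !inE => /andP [xQ /orP [/eqP xP|xPD]] xl.
  by move: (outside_avoids lLD); rewrite -xP xl.
by exists x; rewrite // !inE xQ xPD.
Qed.

Lemma minimal_extra_line_empty m x :
  m \in LD -> ~~ inc P m -> x \in PD -> ~~ inc x m.
Proof.
have [[_ dom_lines] min] := minD.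
move=> mLD Pm xPD; apply/negP => xm.
apply: (min PD (LD :\ m) (subxx _) (subsetDl _ _)); first by rewrite orbC proper_neq ?properD1.
apply: (dominating_pencil (P := P)).
  apply/subsetP => l; rewrite in_pencil !inE => Pl; apply/andP; split.
    by apply: contraNneq Pm => <-.
  by apply: (subsetP penLD); rewrite in_pencil.
move=> l; rewrite !inE negb_and negbK; have [->|lm] /= := eqVneq l m.
  by exists x.
exact: dom_lines.
Qed.

(* Two extra lines m1, m2 meet in a point R outside P_D: then D + R is
   dominating of size |D|+1 and contains the smaller dominating set
   (P_D + R, L_D - m1 - m2). *)
Lemma stable_extra_line_unique m1 m2 : stable_dom inc PD LD ->
  m1 \in LD -> m2 \in LD -> ~~ inc P m1 -> ~~ inc P m2 -> m1 = m2.
Proof.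
move=> [_ stab] L1 L2 P1 P2; have [//|m12] := eqVneq m1 m2; exfalso.
have [_ meet _ _] := plane; have [R [R1 R2 _]] := meet _ _ m12.
have [[_ dom_lines] _] := minD.
have RPD : R \notin PD.
  by apply/negP => RPD; have := minimal_extra_line_empty L1 P1 RPD; rewrite R1.
have lines_R l : l \notin LD -> exists2 x, x \in R |: PD & inc x l.
  by move/dom_lines => [x xPD xl]; exists x; rewrite // inE xPD orbT.
apply: (stab (R |: PD) LD (subsetUr _ _) (subxx _)).
- exact: dominating_pencil penLD lines_R.
- by rewrite /dsize cardsU1 RPD.
exists (R |: PD), (LD :\ m1 :\ m2); split.
- exact: subxx.
- exact: subset_trans (subsetDl _ _) (subsetDl _ _).
- apply: (dominating_pencil (P := P)).
    apply/subsetP => l; rewrite in_pencil !inE => Pl.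
    rewrite (subsetP penLD) ?in_pencil // andbT.
    by apply/andP; split; [apply: contraNneq P2 => <- | apply: contraNneq P1 => <-].
  move=> l; rewrite !inE !negb_and !negbK.
  have [->|_] /= := eqVneq l m2; first by exists R; rewrite ?inE ?eqxx.
  have [->|_] /= := eqVneq l m1; first by exists R; rewrite ?inE ?eqxx.
  exact: lines_R.
- rewrite /dsize cardsU1 RPD (cardsD1 m1 LD) L1 (cardsD1 m2 (LD :\ m1)).
  by rewrite !inE eq_sym m12 L2 /=; lia.
Qed.

Lemma minimal_pencil_blocking : LD = pencil inc P ->
  blocking inc (P |: PD) /\ essential_except (blocking inc) (P |: PD) P.
Proof.
have [[_ dom_lines] _] := minD.
move=> LDe; split.
  move=> l; have [Pl|Pl] := boolP (inc P l); first by exists P; rewrite ?setU11.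
  have lLD : l \notin LD by rewrite LDe in_pencil.
  have [x xPD xl] := dom_lines l lLD.
  by exists x; rewrite // inE xPD orbT.
move=> Q QPD QP blk; apply: (minimal_point_needed_setU1 QPD QP) => l _.
exact: blk.
Qed.

Lemma minimal_pencil_aff_blocking ell : ~~ inc P ell ->
  LD = pencil inc P :|: [set ell] ->
  aff_blocking inc ell (P |: PD) /\
  essential_except (aff_blocking inc ell) (P |: PD) P.
Proof.
have [[_ dom_lines] _] := minD.
move=> Pell LDe; have ellLD : ell \in LD by rewrite LDe !inE eqxx orbT.
split; first split.
- move=> x; rewrite !inE => /orP [/eqP -> //|]; exact: minimal_extra_line_empty.
- move=> l lell; have [Pl|Pl] := boolP (inc P l); first by exists P; rewrite ?setU11.
  have lLD : l \notin LD by rewrite LDe !inE negb_or (negbTE Pl) lell.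
  have [x xPD xl] := dom_lines l lLD.
  by exists x; rewrite // inE xPD orbT.
move=> Q QPD QP [_ blk]; apply: (minimal_point_needed_setU1 QPD QP) => l lLD.
by apply: blk; apply: contraNneq lLD => ->.
Qed.

End MinimalWithPencil.
End ProjectivePlane.

Theorem lemma2 (Pt Ln : finType) (inc : Pt -> Ln -> bool) (q : nat)
  (PD : {set Pt}) (LD : {set Ln}) (P : Pt) :
  is_proj_plane inc q ->
  stable_dom inc PD LD ->
  dsize PD LD < 3 * q - 1 ->
  #|pencil inc P :&: LD| = q.+1 ->
  (LD = pencil inc P /\ P \notin PD /\
     blocking inc (P |: PD) /\
     essential_except (blocking inc) (P |: PD) P)
  \/
  (exists ell : Ln,
     [/\ ~~ inc P ell, LD = pencil inc P :|: [set ell], P \notin PD &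
         (aff_blocking inc ell (P |: PD) /\
         essential_except (aff_blocking inc ell) (P |: PD) P /\
         forall ell' : Ln, ~~ inc P ell' ->
           LD = pencil inc P :|: [set ell'] -> ell' = ell)]).
Proof.
move=> plane stab _ card_PLD; have minD := stab.1.
have penLD := pencil_subset_of_card plane card_PLD.
have PPD := minimal_pencil_center_notin plane minD penLD.
have extra_unique := stable_extra_line_unique plane minD penLD stab.
case: (pickP (fun m => (m \in LD) && ~~ inc P m)) => [ell /andP [ellLD Pell] | none].
  have LDe : LD = pencil inc P :|: [set ell].
    apply/setP => m; rewrite !inE; have [Pm|Pm] /= := boolP (inc P m).
      by apply: (subsetP penLD); rewrite in_pencil.
    by apply/idP/eqP => [mLD|->//]; apply: extra_unique.
  right; exists ell; split=> //.
  have [aff ess] := minimal_pencil_aff_blocking plane minD penLD Pell LDe.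
  split=> //; split=> // ell' Pell' LDe'.
  by apply: extra_unique; rewrite // LDe' !inE eqxx orbT.
have LDe : LD = pencil inc P.
  apply/eqP; rewrite eqEsubset penLD andbT; apply/subsetP => m mLD.
  by rewrite in_pencil; move: (none m); rewrite mLD => /negbFE.
have blk := minimal_pencil_blocking plane minD penLD LDe.
by left; split=> //; split.
Qed.
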